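(* For positive integers $n$ and $m$, $\chi_{ld}(F_n+\overline{K_{m}})=2n+2$.
   Context: All graphs are finite, simple and undirected. For a graph $G=(V,E)$ of order $N$ without isolated vertices, a bijection $f\colon V\to\{1,2,\dots,N\}$ is a local distance antimagic labeling if $w(u)\neq w(v)$ for every edge $uv$, where $w(u)=\sum_{x\in N(u)}f(x)$ and $N(u)$ is the open neighborhood of $u$. $\chi_{ld}(G)$ is the minimum number of distinct values of $w$ over all local distance antimagic labelings of $G$. The friendship graph $F_n$ consists of $n$ triangles sharing one common vertex $c$ (vertices $c,u_i,v_i$, $1\le i\le n$, with edges $cu_i, cv_i, u_iv_i$), i.e. $F_n=nK_2+K_1$. $\overline{K_m}$ is the edgeless graph on $m$ vertices. $G+H$ is the join: the disjoint union of $G$ and $H$ plus all edges between $V(G)$ and $V(H)$. *)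

From mathcomp Require Import all_boot.
Set Implicit Arguments. Unset Strict Implicit. Unset Printing Implicit Defensive.

Definition simple_graph (T : finType) (e : rel T) : Prop :=
  symmetric e /\ irreflexive e.

Definition no_isolated (T : finType) (e : rel T) : Prop :=
  forall u : T, exists v : T, e u v.

(* Friendship graph F_n: None = centre c, Some (i,false) = u_i, Some (i,true) = v_i. *)
Definition friend_vert (n : nat) : finType := option ('I_n * bool).

Definition friend_rel (n : nat) : rel (friend_vert n) :=
  fun x y => match x, y with
  | None, Some _ => true
  | Some _, None => true
  | Some (i, b), Some (j, b') => (i == j) && (b != b')
  | None, None => false
  end.

Definition edgeless_rel (m : nat) : rel 'I_m := fun _ _ => false.

Definition join_rel (T1 T2 : finType) (e1 : rel T1) (e2 : rel T2) : rel (T1 + T2) :=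
  fun x y => match x, y with
  | inl a, inl b => e1 a b
  | inr a, inr b => e2 a b
  | _, _ => true
  end.

Definition is_labeling (T : finType) (f : T -> nat) : Prop :=
  injective f /\ forall x, 1 <= f x <= #|T|.

Definition weight (T : finType) (e : rel T) (f : T -> nat) (u : T) : nat :=
  \sum_(x : T | e u x) f x.

Definition local_dist_antimagic (T : finType) (e : rel T) (f : T -> nat) : Prop :=
  is_labeling f /\ forall u v, e u v -> weight e f u != weight e f v.

Definition num_colors (T : finType) (e : rel T) (f : T -> nat) : nat :=
  size (undup [seq weight e f u | u <- enum T]).

Definition is_chi_ld (T : finType) (e : rel T) (k : nat) : Prop :=
  (exists f, local_dist_antimagic e f /\ num_colors e f = k) /\
  (forall f, local_dist_antimagic e f -> k <= num_colors e f).

Arguments friend_rel n : clear implicits.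
Arguments edgeless_rel m : clear implicits.

From mathcomp Require Import all_boot zify.

(* In F_n + K_m-bar every vertex of F_n sees all of K_m-bar, so all x_j get the
   same weight f(c) + (sum of the leaf labels), and a leaf u gets
   f(c) + f(partner u) + (sum of the x_j labels).  Hence for any local distance
   antimagic f the centre, the 2n leaves and one x_j have pairwise distinct
   weights (adjacent pairs by antimagicness, two leaves by injectivity of f):
   exactly 2n + 2 weights occur.  Such an f exists: label the centre 1, then
   the leaves and the x_j in two consecutive blocks.  The only edge condition
   that is not automatic says that the 2n - 1 leaves other than a given one do
   not have the same label sum as the m vertices x_j; putting the block with
   fewer of these vertices first makes its sum strictly smaller. *)

Lemma sum_option (I : finType) (F : option I -> nat) :
  \sum_x F x = F None + \sum_i F (Some i).
Proof. by rewrite ![index_enum _]unlock [@Finite.enum in LHS]unlock /= big_cons big_map. Qed.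

Section JoinWeight.
Variables (T1 T2 : finType) (e1 : rel T1) (e2 : rel T2) (f : T1 + T2 -> nat).

Lemma weight_join_inl a :
  weight (join_rel e1 e2) f (inl a) = weight e1 (f \o inl) a + \sum_b f (inr b).
Proof. by rewrite /weight big_sumType. Qed.

Lemma weight_join_inr b :
  weight (join_rel e1 e2) f (inr b) = \sum_a f (inl a) + weight e2 (f \o inr) b.
Proof. by rewrite /weight big_sumType. Qed.

End JoinWeight.

Lemma weight_edgeless m (g : 'I_m -> nat) j : weight (edgeless_rel m) g j = 0.
Proof. exact: big_pred0. Qed.

Definition partner {n} (p : 'I_n * bool) : 'I_n * bool := (p.1, ~~ p.2).

Lemma partner_neq n (p : 'I_n * bool) : partner p != p.
Proof. by case: p => i []; rewrite /partner xpair_eqE eqxx. Qed.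

Section FriendWeight.
Variables (n : nat) (g : friend_vert n -> nat).

Lemma weight_friend_centre : weight (friend_rel n) g None = \sum_p g (Some p).
Proof. by rewrite /weight big_mkcond sum_option. Qed.

Lemma weight_friend_leaf p :
  weight (friend_rel n) g (Some p) = g None + g (Some (partner p)).
Proof.
rewrite /weight big_mkcond sum_option /= (bigD1 (partner p)) //= big1 ?addn0.
  by case: p => i b; rewrite eqxx; case: b.
case: p => i b [j c] /=; rewrite /partner xpair_eqE eq_sym.
by case: (i == j); case: b; case: c.
Qed.

End FriendWeight.

Lemma num_colorsE (T : finType) (e : rel T) (f : T -> nat) (s : seq T) :
  uniq s -> {in s &, injective (weight e f)} ->
  (forall x, exists2 y, y \in s & weight e f x = weight e f y) ->
  num_colors e f = size s.
Proof.
move=> s_uniq w_inj w_s; rewrite -(size_map (weight e f)); apply/perm_size/uniq_perm.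
- exact: undup_uniq.
- by rewrite map_inj_in_uniq.
move=> z; rewrite mem_undup; apply/mapP/mapP => -[x xs ->]; last by exists x; rewrite ?mem_enum.
by have [y ys ->] := w_s x; exists y.
Qed.

Section FriendJoinEdgeless.
Variables (n m : nat) (f : friend_vert n + 'I_m -> nat).
Local Notation G := (join_rel (friend_rel n) (edgeless_rel m)).
Local Notation w := (weight G f).
Local Notation centre := (inl None).
Local Notation leaf p := (inl (Some p)).
Local Notation leaf_sum := (\sum_p f (leaf p)).
Local Notation indep_sum := (\sum_j f (inr j)).

Lemma weight_centre : w centre = leaf_sum + indep_sum.
Proof. by rewrite weight_join_inl weight_friend_centre. Qed.

Lemma weight_leaf p : w (leaf p) = f centre + f (leaf (partner p)) + indep_sum.
Proof. by rewrite weight_join_inl weight_friend_leaf. Qed.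

Lemma weight_indep j : w (inr j) = f centre + leaf_sum.
Proof. by rewrite weight_join_inr weight_edgeless sum_option addn0. Qed.

Lemma weight_leaf_inj : injective f -> injective (fun p => w (leaf p)).
Proof.
move=> f_inj p q /eqP; rewrite !weight_leaf eqn_add2r eqn_add2l => /eqP /f_inj [].
by case: p q => i b [j c] /= -> /(congr1 negb); rewrite !negbK => ->.
Qed.

Lemma friend_join_antimagic :
  is_labeling f -> f centre != indep_sum ->
  (forall p, leaf_sum != f centre + f (leaf p)) ->
  (forall p, leaf_sum != f (leaf p) + indep_sum) ->
  local_dist_antimagic G f.
Proof.
move=> f_lab c_I L_c L_I; split=> // -[[[i b]|]|j] [[[i' b']|]|j'] //= edge;
  rewrite ?weight_leaf ?weight_centre ?weight_indep.
- move: edge => /andP[/eqP <- bb']; rewrite eqn_add2r eqn_add2l.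
  by rewrite (inj_eq f_lab.1); case: b b' bb' => -[] // _; apply/eqP => -[].
- by rewrite eqn_add2r eq_sym L_c.
- by rewrite -addnA eqn_add2l eq_sym L_I.
- by rewrite eqn_add2r L_c.
- by rewrite addnC eqn_add2r eq_sym.
- by rewrite -addnA eqn_add2l L_I.
- by rewrite addnC eqn_add2l.
Qed.

Lemma leaf_sum_gt p :
  (forall q, f centre < f (leaf q)) -> f centre + f (leaf p) < leaf_sum.
Proof.
move=> centre_lt; rewrite (bigD1 p) // (bigD1 (partner p)) ?partner_neq //=.
by rewrite addnC ltn_add2l (leq_trans (centre_lt (partner p))) ?leq_addr.
Qed.

Lemma num_colors_friend_join :
  0 < m -> local_dist_antimagic G f -> num_colors G f = 2 * n + 2.
Proof.
move=> m_gt0 [[f_inj _] f_anti]; pose j0 := Ordinal m_gt0.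
have adj_inj x y : G x y -> w x = w y -> x = y by move/f_anti/eqP.
rewrite (@num_colorsE _ _ _ (inr j0 :: map inl (enum (friend_vert n)))).
- by rewrite /= size_map -cardE card_option card_prod card_ord card_bool; lia.
- rewrite /= map_inj_uniq ?enum_uniq ?andbT; last by move=> a b [].
  by apply/mapP => -[].
- move=> x y; rewrite !inE => /predU1P[->|/mapP[a _ ->]] /predU1P[->|/mapP[b _ ->]] //.
  + exact: adj_inj.
  + exact: adj_inj.
  case: a b => [[i c]|] [[i' c']|] //; [by move/(weight_leaf_inj f_inj) -> | exact: adj_inj..].
case=> [a|j]; first by exists (inl a); rewrite // inE map_f ?mem_enum ?orbT.
by exists (inr j0); rewrite ?mem_head // !weight_indep.
Qed.

End FriendJoinEdgeless.

Lemma sum_lt_sum (I J : finType) (P : pred I) (Q : pred J)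
    (F : I -> nat) (G : J -> nat) t :
  #|P| <= #|Q| -> 0 < #|Q| -> (forall i, P i -> F i <= t) -> (forall j, Q j -> t < G j) ->
  \sum_(i | P i) F i < \sum_(j | Q j) G j.
Proof.
move=> PQ Q_gt0 F_le G_gt.
have sumF : \sum_(i | P i) F i <= #|P| * t by rewrite -sum_nat_const; exact: leq_sum.
have sumG : #|Q| * t.+1 <= \sum_(j | Q j) G j by rewrite -sum_nat_const; exact: leq_sum.
have : #|P| * t <= #|Q| * t by rewrite leq_mul2r PQ orbT.
rewrite mulnS in sumG; lia.
Qed.

Definition order_label {T : eqType} (s : seq T) (x : T) : nat := (index x s).+1.

Lemma order_label_is_labeling (T : finType) (s : seq T) :
  uniq s -> (forall x, x \in s) -> is_labeling (order_label s).
Proof.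
move=> s_uniq s_all; split=> [x y [] | x]; first exact: index_inj.
have <- : #|s| = #|T| by apply: eq_card => y; rewrite s_all.
by rewrite /order_label (card_uniqP s_uniq) ltnS index_mem s_all.
Qed.

Lemma order_label_head (T : eqType) (c : T) s : order_label (c :: s) c = 1.
Proof. by rewrite /order_label /= eqxx. Qed.

Lemma order_label_gt1 (T : eqType) (c : T) s x : c != x -> 1 < order_label (c :: s) x.
Proof. by rewrite /order_label /= => /negPf ->. Qed.

Lemma order_label_fst (T : eqType) (c : T) l h x :
  x \in l -> order_label (c :: l ++ h) x <= (size l).+1.
Proof.
by move=> xl; rewrite /order_label /= index_cat xl; case: eqP => // _; rewrite ltnS index_mem.
Qed.

Lemma order_label_snd (T : eqType) (c : T) l h y :
  uniq (c :: l ++ h) -> y \in h -> (size l).+1 < order_label (c :: l ++ h) y.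
Proof.
rewrite /= mem_cat negb_or cat_uniq => /andP[/andP[_ ch] /and3P[_ hl _]] yh.
have yl : y \notin l := hasPn hl y yh.
have yc : c != y by apply: contraNneq ch => ->.
by rewrite /order_label /= (negPf yc) index_cat (negPf yl) !ltnS leq_addr.
Qed.

Section FriendJoinLabel.
Variables (n m : nat).
Hypotheses (n_gt0 : 0 < n) (m_gt0 : 0 < m).
Local Notation V := (friend_vert n + 'I_m)%type.
Local Notation G := (join_rel (friend_rel n) (edgeless_rel m)).

Let leaves : seq V := [seq inl (Some p) | p <- enum {: 'I_n * bool}].
Let indeps : seq V := [seq inr j | j <- enum 'I_m].

Definition friend_join_order : seq V :=
  inl None :: if (n * 2).-1 <= m then leaves ++ indeps else indeps ++ leaves.

Lemma friend_join_order_uniq : uniq friend_join_order.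
Proof.
have leaves_uniq : uniq leaves by rewrite map_inj_uniq ?enum_uniq // => p q [].
have indeps_uniq : uniq indeps by rewrite map_inj_uniq ?enum_uniq // => p q [].
have disj : ~~ has (mem leaves) indeps by apply/hasPn => _ /mapP[j _ ->]; apply/mapP => -[].
have centre_leaves : inl None \notin leaves by apply/mapP => -[].
have centre_indeps : inl None \notin indeps by apply/mapP => -[].
rewrite /friend_join_order; case: ifP => _;
  by rewrite cons_uniq mem_cat (negPf centre_leaves) (negPf centre_indeps) cat_uniq
             leaves_uniq indeps_uniq ?disj // has_sym disj.
Qed.

Lemma leaf_in_leaves p : inl (Some p) \in leaves.
Proof. by apply/mapP; exists p; rewrite ?mem_enum. Qed.

Lemma indep_in_indeps j : inr j \in indeps.
Proof. by apply/mapP; exists j; rewrite ?mem_enum. Qed.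

Lemma mem_friend_join_order x : x \in friend_join_order.
Proof.
rewrite /friend_join_order; case: ifP => _; case: x => [[p|]|j];
  by rewrite inE mem_cat ?eqxx ?leaf_in_leaves ?indep_in_indeps ?orbT.
Qed.

Local Notation lab := (order_label friend_join_order).

Lemma other_leaves_sum_neq p :
  \sum_(q | q != p) lab (inl (Some q)) != \sum_j lab (inr j).
Proof.
have card_others : #|predC1 p| = (n * 2).-1 by rewrite cardC1 card_prod card_bool card_ord.
have card_indeps : #|@predT 'I_m| = m := card_ord m.
move: friend_join_order_uniq; rewrite /friend_join_order.
case: leqP => [low | high] order_uniq.
  rewrite ltn_eqF //; apply: (@sum_lt_sum _ _ (predC1 p) predT _ _ (size leaves).+1).
  - by rewrite card_others card_indeps.
  - by rewrite card_indeps.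
  - by move=> q _; apply: order_label_fst; exact: leaf_in_leaves.
  by move=> j _; apply: order_label_snd order_uniq _; exact: indep_in_indeps.
rewrite eq_sym ltn_eqF //; apply: (@sum_lt_sum _ _ predT (predC1 p) _ _ (size indeps).+1).
- by rewrite card_others card_indeps ltnW.
- by rewrite card_others; lia.
- by move=> j _; apply: order_label_fst; exact: indep_in_indeps.
by move=> q _; apply: order_label_snd order_uniq _; exact: leaf_in_leaves.
Qed.

Lemma friend_join_order_antimagic : local_dist_antimagic G lab.
Proof.
have centre_lt x : x != inl None -> lab (inl None) < lab x.
  by rewrite order_label_head eq_sym; exact: order_label_gt1.
apply: friend_join_antimagic.
- exact: order_label_is_labeling friend_join_order_uniq mem_friend_join_order.
- have j0_lt := centre_lt (inr (Ordinal m_gt0)) isT.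
  by rewrite (bigD1 (Ordinal m_gt0)) //= ltn_eqF // (leq_trans j0_lt) ?leq_addr.
- by move=> p; rewrite gtn_eqF ?leaf_sum_gt.
by move=> p; rewrite (bigD1 p) //= eqn_add2l other_leaves_sum_neq.
Qed.

End FriendJoinLabel.

Theorem mainTheorem3 (n m : nat) (hn : 0 < n) (hm : 0 < m) :
  is_chi_ld (join_rel (friend_rel n) (edgeless_rel m)) (2 * n + 2).
Proof.
have lab_antimagic := friend_join_order_antimagic n m hn hm.
split=> [|f f_antimagic]; last by rewrite num_colors_friend_join.
by exists (order_label (friend_join_order n m)); rewrite num_colors_friend_join.
Qed.
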